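(* Let $(X,\mathcal{A})$ be a measurable space, $f\in\mathcal{F}_{[0,1]}^{(X,\mathcal{A})}$, and $m$ a monotone measure on $(X,\mathcal{A})$ with $m(X)=1$. Then for all $0<r\le s<\infty$, \[ \big(\mathbf{Su}(m,f^{s})\big)^{1/s}\ \ge\ \big(\mathbf{Su}(m,f^{r})\big)^{1/r}. \]
   Context: A monotone measure on $(X,\mathcal{A})$ is $m:\mathcal{A}\to[0,\infty]$ with $m(\emptyset)=0$, $m(X)>0$, $m(A)\le m(B)$ for $A\subseteq B$. $\mathcal{F}_{[0,1]}^{(X,\mathcal{A})}$ is the set of $\mathcal{A}$-measurable $f:X\to[0,1]$. The Sugeno integral is $\mathbf{Su}(m,f)=\sup\{\min(t,m(\{f\ge t\})) : t\in(0,\infty]\}$. *)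

From HB Require Import structures.
From mathcomp Require Import all_boot all_order all_algebra.
From mathcomp Require Import all_classical all_reals all_analysis.
Set Implicit Arguments. Unset Strict Implicit. Unset Printing Implicit Defensive.
Import Order.TTheory GRing.Theory Num.Theory.
Local Open Scope classical_set_scope.
Local Open Scope ring_scope.

(* Monotone measure on (T, measurable): m : A -> [0, +oo] (values outside the
   sigma-algebra are irrelevant), m set0 = 0, m setT > 0, monotone on A. *)
Definition monotone_measure (d : measure_display) (T : measurableType d)
  (R : realType) (m : set T -> \bar R) : Prop :=
  [/\ m set0 = 0%E,
      (0 < m setT)%E,
      (forall A, measurable A -> (0 <= m A)%E) &
      (forall A B, measurable A -> measurable B -> A `<=` B -> (m A <= m B)%E)].

Definition F01 (d : measure_display) (T : measurableType d) (R : realType)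
  (f : T -> R) : Prop :=
  measurable_fun setT f /\ (forall x, 0 <= f x <= 1).

Definition sugeno (d : measure_display) (T : measurableType d) (R : realType)
  (m : set T -> \bar R) (f : T -> R) : \bar R :=
  ereal_sup [set Order.min t (m [set x | (t <= (f x)%:E)%E]) | t in
              [set t : \bar R | (0 < t)%E]].

From HB Require Import structures.
From mathcomp Require Import all_boot all_order all_algebra.
From mathcomp Require Import all_classical all_reals all_analysis.
Set Implicit Arguments. Unset Strict Implicit. Unset Printing Implicit Defensive.
Import Order.TTheory GRing.Theory Num.Theory.
Local Open Scope classical_set_scope.
Local Open Scope ring_scope.

(* With [q = s / r >= 1] and [g = f^r], [f^s = g^q].  Every term [min(t, m{g >= t})]
   of [Su(m, g)] is at most [c := Su(m, g^q)^(1/q)]: otherwise [t > c] and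
   [m{g >= t} > c], while the term [min(t^q, m{g^q >= t^q})] of [Su(m, g^q)],
   whose level set is the same, is at most [Su(m, g^q) = c^q <= c] although
   [t^q > c^q]. *)

Lemma powR_le1 {R : realType} (x p : R) : 0 <= p -> 0 <= x <= 1 -> x `^ p <= 1.
Proof.
move=> p0 /andP[x0 x1].
by have := ge0_ler_powR p0 _ _ x1; rewrite powR1; apply; rewrite nnegrE.
Qed.

Lemma gt0_ler_powR2 {R : realType} (p x y : R) : 0 < p -> 0 <= x -> 0 <= y ->
  (x `^ p <= y `^ p) = (x <= y).
Proof.
move=> p0 x0 y0; apply/idP/idP => [|xy].
  by apply: contraTT; rewrite -!ltNge; apply: gt0_ltr_powR; rewrite ?nnegrE.
by apply: (ge0_ler_powR (ltW p0)); rewrite ?nnegrE.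
Qed.

Section sugeno_power.
Variables (d : measure_display) (T : measurableType d) (R : realType).
Variable m : set T -> \bar R.
Hypothesis m0 : m set0 = 0%E.

Lemma level_set_gt1 (g : T -> R) (t : \bar R) : (forall x, g x <= 1) ->
  (1 < t)%E -> [set x | (t <= (g x)%:E)%E] = set0.
Proof.
move=> g1 t1; apply/seteqP; split => x //= tg.
have : (t <= 1)%E by apply: le_trans tg _; rewrite lee_fin.
by rewrite leNgt t1.
Qed.

Lemma sugeno_ge0 (g : T -> R) : (forall x, g x <= 1) -> (0 <= sugeno m g)%E.
Proof.
move=> g1; apply: le_ereal_sup_tmp.
exists (Order.min 2%:E (m [set x | (2%:E <= (g x)%:E)%E])).
  by exists 2%:E => //=; rewrite lte_fin.
by rewrite level_set_gt1 // ?lte_fin ?ltr1n // m0 le_min lee_fin ler0n lexx.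
Qed.

Lemma sugeno_le1 (g : T -> R) : (forall x, g x <= 1) -> (sugeno m g <= 1)%E.
Proof.
move=> g1; apply: ge_ereal_sup => _ [t _ <-].
have [t1|t1] := leP t 1%E; first by rewrite ge_min t1.
by rewrite level_set_gt1 // m0 ge_min lee01 orbT.
Qed.

Lemma level_set_powR (g : T -> R) (t q : R) : 0 < t -> 0 < q ->
  (forall x, 0 <= g x) ->
  [set x | ((t `^ q)%:E <= (g x `^ q)%:E)%E] = [set x | (t%:E <= (g x)%:E)%E].
Proof.
move=> t0 q0 g0; apply/funext => x /=.
by congr is_true; rewrite !lee_fin gt0_ler_powR2 ?(ltW t0).
Qed.

Lemma sugeno_le_poweR (g : T -> R) (q : R) : 1 <= q ->
  (forall x, 0 <= g x <= 1) ->
  (sugeno m g <= poweR (sugeno m (fun x => (g x `^ q)%R)) q^-1)%E.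
Proof.
move=> q1 g01; have q0 : 0 < q := lt_le_trans ltr01 q1.
have g0 x : 0 <= g x by case/andP: (g01 x).
have gq1 x : g x `^ q <= 1 := powR_le1 (ltW q0) (g01 x).
have := sugeno_le1 gq1; have := sugeno_ge0 gq1.
set A := sugeno m _.
have ub_A t : (0 < t)%E ->
    (Order.min t (m [set x | (t <= (g x `^ q)%:E)%E]) <= A)%E.
  by move=> t0; apply: ereal_sup_ubound; exists t.
case: A ub_A => // a ub_a; rewrite !lee_fin => a0 a1.
rewrite poweR_EFin; set c := a `^ q^-1.
have c0 : 0 <= c := powR_ge0 _ _.
have ac : a <= c.
  have [->|a_neq0] := eqVneq a 0; first exact: c0.
  by rewrite ger1_powR ?invf_le1 // lt_neqAle eq_sym a_neq0 a0 a1.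
have ca : c `^ q = a by rewrite -powRrM mulVf ?gt_eqF // powRr1.
apply: ge_ereal_sup => _ [[t| |] //= t0 <-]; last first.
  rewrite (_ : [set x | _] = set0) ?m0 ?ge_min ?lee_fin ?c0 ?orbT //.
  by apply/seteqP; split => x //=; rewrite leNgt ltey.
rewrite lte_fin in t0; rewrite ge_min !lee_fin; case: leP => //= ct.
have := ub_a (t `^ q)%:E; rewrite lte_fin powR_gt0 // => /(_ isT).
rewrite level_set_powR // ge_min lee_fin.
have -> : t `^ q <= a = false.
  by apply/negbTE; rewrite -ltNge -ca (gt0_ltr_powR q0 c0 (ltW t0) ct).
by move=> /le_trans; apply; rewrite lee_fin.
Qed.

End sugeno_power.

Theorem corollary3p30 (d : measure_display) (T : measurableType d) (R : realType)
  (m : set T -> \bar R) (f : T -> R)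
  (hm : monotone_measure m) (hmX : m setT = 1%E) (hf : F01 f)
  (r s : R) (hr : 0 < r) (hrs : r <= s) :
  (poweR (sugeno m (fun x => powR (f x) s)) (s^-1) >=
   poweR (sugeno m (fun x => powR (f x) r)) (r^-1))%E.
Proof.
have [m0 _ _ _] := hm; have [_ f01] := hf.
have s0 : 0 < s := lt_le_trans hr hrs.
set q := r^-1 * s.
have q1 : 1 <= q by rewrite ler_pdivlMl // mulr1.
have fr01 x : 0 <= f x `^ r <= 1 by rewrite powR_ge0 (powR_le1 (ltW hr) (f01 x)).
have frq : (fun x => (f x `^ r) `^ q) = (fun x => f x `^ s).
  by apply/funext => x; rewrite -powRrM /q mulrA mulfV ?gt_eqF // mul1r.
have := sugeno_le_poweR m0 q1 fr01; rewrite frq => le_rs.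
have -> : s^-1 = q^-1 * r^-1.
  by rewrite /q invfM invrK mulrAC mulfV ?gt_eqF // mul1r.
rewrite poweRrM; apply: gt0_ler_poweR => //; rewrite ?invr_ge0 ?ltW //.
- by rewrite in_itv /= leey andbT sugeno_ge0 // => x; case/andP: (fr01 x).
- by rewrite in_itv /= leey andbT poweR_ge0.
Qed.
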